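(* Let $n$ be a positive integer and let $L_3(n)$ denote the number of $3\times n$ Latin rectangles. For $s:\{0,1\}^3\to\mathbb{Z}_{\ge 0}$, written $s_\varepsilon$ for $\varepsilon=\varepsilon_1\varepsilon_2\varepsilon_3\in\{0,1\}^3$, and nonempty $J\subseteq\{1,2,3\}$, let $f_J=\sum_{\varepsilon:\ \varepsilon_j=0\text{ for all } j\in J}s_\varepsilon$ (so e.g. $f_{\{1\}}=s_{000}+s_{010}+s_{001}+s_{011}$, $f_{\{1,2\}}=s_{000}+s_{001}$, $f_{\{1,2,3\}}=s_{000}$). Then \[ L_3(n)=\sum_{s}(-1)^{\sum_\varepsilon|\varepsilon|\,s_\varepsilon}\frac{n!}{\prod_\varepsilon s_\varepsilon!}\big[f_{\{1\}}f_{\{2\}}f_{\{3\}}-f_{\{1,2\}}f_{\{3\}}-f_{\{2,3\}}f_{\{1\}}-f_{\{1,3\}}f_{\{2\}}+2f_{\{1,2,3\}}\big]^n, \] where the sum runs over all $s:\{0,1\}^3\to\mathbb{Z}_{\ge0}$ with $\sum_\varepsilon s_\varepsilon=n$ and $|\varepsilon|=\varepsilon_1+\varepsilon_2+\varepsilon_3$.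
   Context: A $k\times n$ Latin rectangle is a $k\times n$ matrix with entries in $\{1,\dots,n\}$ such that no row and no column contains a repeated entry (so each row is a permutation of $\{1,\dots,n\}$). The convention $0^0=1$ is used. *)

From mathcomp Require Import all_boot all_order all_algebra.
Set Implicit Arguments. Unset Strict Implicit. Unset Printing Implicit Defensive.
Import GRing.Theory Num.Theory.

(* A k x n Latin rectangle, with symbols 'I_n (= {0,..,n-1}, a relabelling of {1,..,n}):
   every row is injective (hence a permutation of 'I_n) and every column is injective. *)
Definition latin_rect (k n : nat) (M : 'M['I_n]_(k, n)) : bool :=
  [forall i : 'I_k, injectiveb (fun j : 'I_n => M i j)] &&
  [forall j : 'I_n, injectiveb (fun i : 'I_k => M i j)].

Definition L (k n : nat) : nat := #|[pred M : 'M['I_n]_(k, n) | latin_rect M]|.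

(* eps in {0,1}^3, coordinates indexed by 'I_3 (0-based for {1,2,3}); true = 1 *)
Definition eps3 := {ffun 'I_3 -> bool}.

Definition weight (e : eps3) : nat := \sum_(j < 3) (e j : nat).

(* f_J = sum of s_eps over eps with eps_j = 0 for all j in J; J is given as a list
   of 1-based indices in {1,2,3} (coordinate j of the paper is ordinal j-1). *)
Definition fJ (s : eps3 -> nat) (J : seq nat) : nat :=
  \sum_(e : eps3 | [forall j : 'I_3, (j.+1 \in J) ==> ~~ e j]) s e.

From mathcomp Require Import all_boot all_order all_algebra.
From mathcomp Require Import ring.
Import GRing.Theory Num.Theory.

Set Implicit Arguments.
Unset Strict Implicit.
Unset Printing Implicit Defensive.

(* Each row of a Latin rectangle is onto, so inclusion-exclusion over the sets
   U_i of symbols avoided by row i rewrites L_k(n) as a signed sum over families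
   U of a(U)^n, where a(U) counts the injective columns c with c_i \notin U_i: once
   the row conditions are relaxed, the n columns are chosen independently.  For
   k = 3, a(U) counts triples of distinct elements of the complements of the U_i,
   which inclusion-exclusion expresses through the numbers s_eps of symbols with
   membership pattern eps in {0,1}^3; the families with given pattern counts s
   are counted by the multinomial coefficient n! / prod s_eps!. *)

Section BigTuple.
Variables (R : Type) (idx : R) (op : Monoid.com_law idx) (T : finType).

Lemma big_tuple_cons n (F : n.+1.-tuple T -> R) :
  \big[op/idx]_(t : n.+1.-tuple T) F t =
  \big[op/idx]_(x : T) \big[op/idx]_(t : n.-tuple T) F [tuple of x :: t].
Proof.
rewrite pair_big (reindex (fun p : T * n.-tuple T => [tuple of p.1 :: p.2])) //=.
exists (fun t => (thead t, [tuple of behead t])) => [[x t] _ | t _].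
  by rewrite theadE; congr pair; apply: val_inj.
by rewrite [RHS]tuple_eta.
Qed.

Lemma big_tuple0 (F : 0.-tuple T -> R) : \big[op/idx]_(t : 0.-tuple T) F t = F [tuple].
Proof. by rewrite (big_pred1 [tuple]) // => t; apply/esym/eqP/tuple0. Qed.

Lemma big_tuple3 (F : 3.-tuple T -> R) :
  \big[op/idx]_(t : 3.-tuple T) F t =
  \big[op/idx]_x \big[op/idx]_y \big[op/idx]_z F [tuple x; y; z].
Proof.
rewrite big_tuple_cons; apply: eq_bigr => x _; rewrite big_tuple_cons.
apply: eq_bigr => y _; rewrite big_tuple_cons; apply: eq_bigr => z _.
by rewrite big_tuple0.
Qed.

End BigTuple.

Lemma card_sumb (T : finType) (A : {pred T}) : #|A| = (\sum_t (t \in A))%N.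
Proof. by rewrite -sum1_card big_mkcond; apply: eq_bigr => t _; case: (t \in A). Qed.

Definition tuples_with_counts (E : finType) n (s : E -> nat) : {pred n.-tuple E} :=
  [pred t : n.-tuple E | [forall e, count_mem e t == s e]].
Arguments tuples_with_counts {E} n s.

Section Multinomial.
Variable E : finType.

Lemma card_tuples_with_countsS n (s : E -> nat) :
  #|tuples_with_counts n.+1 s| =
  (\sum_(x | 0 < s x) #|tuples_with_counts n (fun e => s e - (e == x))|)%N.
Proof.
rewrite card_sumb big_tuple_cons [RHS]big_mkcond /=; apply: eq_bigr => x _.
case: (posnP (s x)) => [sx0 | sx_gt0] /=.
  by apply: big1 => t _; rewrite inE; case: forallP => // /(_ x); rewrite /= eqxx sx0.
rewrite card_sumb; apply: eq_bigr => t _; congr nat_of_bool; apply: eq_forallb => e /=.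
case: (eqVneq x e) => [<- | _]; rewrite ?subn0 //.
by case: (s x) sx_gt0 => // m _; rewrite /= add1n eqSS subn1.
Qed.

Lemma prod_fact_subn1 (s : E -> nat) x : 0 < s x ->
  (\prod_e (s e)`! = s x * \prod_e (s e - (e == x))`!)%N.
Proof.
move=> sx_gt0; rewrite (bigD1 x) // [in RHS](bigD1 x) //= eqxx mulnA; congr (_ * _)%N.
  by case: (s x) sx_gt0 => // m _; rewrite factS subn1.
by apply: eq_bigr => e /negbTE ->; rewrite subn0.
Qed.

Lemma card_tuples_with_counts n (s : E -> nat) : (\sum_e s e)%N = n ->
  (#|tuples_with_counts n s| * \prod_e (s e)`!)%N = n`!.
Proof.
elim: n s => [|n IHn] s sum_s.
  have s0 e : s e = 0 by apply/eqP; move/eqP: sum_s; rewrite sum_nat_eq0 => /forallP/(_ e).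
  rewrite card_sumb big_tuple0 big1 => [|e _]; last by rewrite s0.
  by rewrite inE; case: forallP => // -[e]; rewrite s0.
rewrite card_tuples_with_countsS big_distrl /=.
rewrite (eq_bigr (fun x => s x * n`!)%N) => [|x sx_gt0]; last first.
  rewrite (prod_fact_subn1 sx_gt0) mulnCA IHn //; apply/eqP.
  rewrite -eqSS -sum_s (bigD1 x) // [X in _ == X](bigD1 x) //= eqxx.
  rewrite (eq_bigr s) => [|e /negbTE ->]; last by rewrite subn0.
  by rewrite subn1 -addSn prednK.
rewrite -big_distrl /= factS -sum_s; congr (_ * _)%N.
rewrite [RHS](bigID (fun x => 0 < s x)) /= [X in _ = _ + X]big1 ?addn0 // => x.
by rewrite lt0n negbK => /eqP.
Qed.

Lemma sum_count_mem (r : seq E) (F : E -> nat) :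
  (\sum_(x <- r) F x = \sum_e count_mem e r * F e)%N.
Proof.
elim: r => [|x r IHr]; first by rewrite big_nil big1.
rewrite big_cons IHr /= [RHS](eq_bigr (fun e => (x == e) * F e + count_mem e r * F e))%N;
  last by move=> e _; rewrite mulnDl.
rewrite big_split /=; congr (_ + _).
by rewrite (bigD1 x) //= eqxx mul1n big1 ?addn0 // => e; rewrite eq_sym => /negbTE ->.
Qed.

Definition counts n (t : n.-tuple E) : {ffun E -> 'I_n.+1} :=
  [ffun e => inord (count_mem e t)].

Lemma countsE n (t : n.-tuple E) e : counts t e = count_mem e t :> nat.
Proof. by rewrite ffunE inordK // ltnS -[X in _ <= X](size_tuple t) count_size. Qed.

Lemma sum_counts n (t : n.-tuple E) : (\sum_e counts t e)%N = n.
Proof.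
rewrite -[RHS](size_tuple t) -sum1_size [RHS]sum_count_mem.
by apply: eq_bigr => e _; rewrite countsE muln1.
Qed.

Lemma counts_eqE n (t : n.-tuple E) (s : {ffun E -> 'I_n.+1}) :
  (counts t == s) = (t \in tuples_with_counts n (fun e => s e)).
Proof.
apply/eqP/forallP => [<- e | count_s]; first by rewrite countsE.
by apply/ffunP => e; apply/val_inj/eqP; rewrite /= countsE.
Qed.

Lemma sum_tuples_by_counts (R : nmodType) n (F : {ffun E -> 'I_n.+1} -> R) :
  (\sum_(t : n.-tuple E) F (counts t) =
   \sum_(s : {ffun E -> 'I_n.+1} | (\sum_e s e)%N == n)
     F s *+ #|tuples_with_counts n (fun e => s e)|)%R.
Proof.
rewrite (partition_big (@counts n) (fun s => (\sum_e s e)%N == n)) => [|t _]; last first.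
  exact/eqP/sum_counts.
apply: eq_bigr => s _; rewrite -sumr_const; apply: eq_big => [t | t /eqP -> //].
by rewrite counts_eqE.
Qed.
End Multinomial.

Local Open Scope ring_scope.

Lemma natr_forall (R : pzSemiRingType) (I : finType) (P : pred I) :
  \prod_i (P i)%:R = [forall i, P i]%:R :> R.
Proof.
rewrite -natr_prod; congr _%:R.
case: (boolP [forall i, P i]) => [/forallP P_all | /forallPn [i /negbTE Pi]].
  by rewrite big1 // => i _; rewrite P_all.
by rewrite (bigD1 i) //= Pi.
Qed.

Lemma injectiveb_onto (T : finType) (f : T -> T) :
  injectiveb f = [forall y, y \in codom f].
Proof.
apply/injectiveP/forallP => [f_inj y | f_onto]; first exact: injF_onto.
have /image_injP f_inj : #|codom f| == #|T| by apply/eqP/eq_card => y; rewrite f_onto.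
by move=> x y; apply: f_inj.
Qed.

Lemma onto_incl_excl (R : pzRingType) (A B : finType) (r : A -> B) :
  [forall y, y \in codom r]%:R =
  \sum_(u : {set B}) (-1) ^+ #|u| * [forall x, r x \notin u]%:R :> R.
Proof.
have avoidE u : [forall x, r x \notin u] = [forall y, (y \in u) ==> (y \notin codom r)].
  apply/forallP/forallP => [r_u y | u_r x].
    by apply/implyP => u_y; apply/codomP => -[x r_x]; move: (r_u x); rewrite -r_x u_y.
  by apply/negP => u_rx; move: (u_r (r x)); rewrite u_rx codom_f.
rewrite -natr_forall (eq_bigr (fun y => - (y \notin codom r)%:R + 1)) => [|y _]; last first.
  by case: (y \in codom r); rewrite /= ?oppr0 ?add0r ?addNr.
rewrite bigA_distr; apply: eq_big => // u _.
rewrite -big_mkcond prodrN avoidE -natr_forall big_mkcond /=; congr (_ * _).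
by apply: eq_bigr => y _; case: (y \in u).
Qed.

Section LatinRectangles.
Variables (R : comPzRingType) (k n : nat).

Definition admissible_column (U : {ffun 'I_k -> {set 'I_n}}) : {pred k.-tuple 'I_n} :=
  [pred c : k.-tuple 'I_n | uniq c && [forall i, tnth c i \notin U i]].

Lemma sum_matrix_prod_cols (T : finType) (F : k.-tuple T -> R) :
  \sum_(M : 'M[T]_(k, n)) \prod_j F [tuple M i j | i < k] = (\sum_c F c) ^+ n.
Proof.
have -> : (\sum_c F c) ^+ n = \prod_(j < n) \sum_c F c by rewrite prodr_const card_ord.
rewrite bigA_distr_bigA.
rewrite (reindex (fun f : {ffun 'I_n -> k.-tuple T} => \matrix_(i, j) tnth (f j) i)).
  apply: eq_bigr => f _; apply: eq_bigr => j _; congr F.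
  by apply: eq_from_tnth => i; rewrite tnth_mktuple mxE.
exists (fun M : 'M[T]_(k, n) => [ffun j => [tuple M i j | i < k]]) => [f _ | M _].
  by apply/ffunP => j; rewrite ffunE; apply: eq_from_tnth => i; rewrite tnth_mktuple mxE.
by apply/matrixP => i j; rewrite mxE ffunE tnth_mktuple.
Qed.

Lemma latin_rect_incl_excl :
  (L k n)%:R = \sum_(U : {ffun 'I_k -> {set 'I_n}})
                 (-1) ^+ (\sum_i #|U i|) * #|admissible_column U|%:R ^+ n :> R.
Proof.
have latinE (M : 'M['I_n]_(k, n)) : (latin_rect M)%:R =
    \prod_i [forall y, y \in codom (fun j => M i j)]%:R
    * \prod_j (uniq [tuple M i j | i < k])%:R :> R.
  rewrite !natr_forall -natrM mulnb; congr (_ && _)%:R.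
  by apply: eq_forallb => i; rewrite injectiveb_onto.
rewrite /L card_sumb natr_sum.
under eq_bigr => M _ do
  rewrite latinE (eq_bigr _ (fun i _ => onto_incl_excl R (fun j => M i j)))
          bigA_distr_bigA big_distrl /=.
rewrite exchange_big /=; apply: eq_bigr => U _.
rewrite card_sumb natr_sum -sum_matrix_prod_cols mulr_sumr; apply: eq_bigr => M _.
rewrite big_split /= prodrXr -mulrA; congr (_ * _).
rewrite !natr_forall -natrM mulnb; congr (nat_of_bool _)%:R.
apply/idP/forallP => [/andP[/forallP avoid /forallP col_uniq] j | adm].
  rewrite inE col_uniq; apply/forallP => i; rewrite tnth_mktuple; exact: (forallP (avoid i) j).
apply/andP; split; apply/forallP => i; last by have /andP[] := adm i.
by apply/forallP => j; have /andP[_ /forallP/(_ i)] := adm j; rewrite tnth_mktuple.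
Qed.

End LatinRectangles.

Section DistinctTriples.
Variables (R : comPzRingType) (T : finType).

Lemma natr_cardsD1 (A : {set T}) x : #|A :\ x|%:R = #|A|%:R - (x \in A)%:R :> R.
Proof. by rewrite (cardsD1 x A) natrD addrAC subrr add0r. Qed.

Lemma sum_natr_in (A B : {set T}) : \sum_(x in A) (x \in B)%:R = #|A :&: B|%:R :> R.
Proof.
rewrite -sumr_const [RHS](eq_bigl (fun x => (x \in A) && (x \in B))) => [|x]; last by rewrite inE.
by rewrite [RHS]big_mkcondr; apply: eq_bigr => x _; case: (x \in B).
Qed.

Variables A0 A1 A2 : {set T}.

Lemma sum_distinct_triples :
  \sum_x \sum_y \sum_z [&& uniq [:: x; y; z], x \in A0, y \in A1 & z \in A2]%:R =
  #|A0|%:R * #|A1|%:R * #|A2|%:R - #|A0 :&: A1|%:R * #|A2|%:R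
  - #|A1 :&: A2|%:R * #|A0|%:R - #|A0 :&: A2|%:R * #|A1|%:R
  + 2 * #|A0 :&: A1 :&: A2|%:R :> R.
Proof.
have choose_z x y : \sum_z [&& uniq [:: x; y; z], x \in A0, y \in A1 & z \in A2]%:R
    = [&& x \in A0 & y \in A1 :\ x]%:R * #|A2 :\ x :\ y|%:R :> R.
  rewrite card_sumb natr_sum mulr_sumr; apply: eq_bigr => z _.
  rewrite -natrM mulnb /= !inE !negb_or ![_ == x]eq_sym [z == y]eq_sym andbT.
  by case: (x \in A0); case: (y \in A1); case: (z \in A2); case: (x == y); case: (x == z);
     case: (y == z).
have choose_y x : \sum_(y in A1 :\ x) #|A2 :\ x :\ y|%:R =
    (#|A1|%:R - (x \in A1)%:R) * (#|A2|%:R - (x \in A2)%:R)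
    - (#|A1 :&: A2|%:R - (x \in A1 :&: A2)%:R) :> R.
  rewrite (eq_bigr (fun y => #|A2|%:R - (x \in A2)%:R - (y \in A2)%:R)) => [|y]; last first.
    by rewrite !inE => /andP[y_neq_x _]; rewrite !natr_cardsD1 !inE y_neq_x.
  rewrite sumrB sumr_const sum_natr_in setIDAC -[_ *+ #|A1 :\ x|]mulr_natr.
  by rewrite natr_cardsD1 natr_cardsD1 mulrC.
transitivity (\sum_(x in A0) \sum_(y in A1 :\ x) #|A2 :\ x :\ y|%:R : R).
  rewrite [RHS]big_mkcond; apply: eq_bigr => x _.
  under eq_bigr => y _ do rewrite choose_z.
  case: (x \in A0) => /=; last by apply: big1 => y _; rewrite mul0r.
  rewrite [RHS]big_mkcond; apply: eq_bigr => y _.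
  by case: (y \in A1 :\ x); rewrite /= ?mul1r ?mul0r.
rewrite (eq_bigr (fun x => #|A1|%:R * #|A2|%:R - #|A1 :&: A2|%:R - #|A2|%:R * (x \in A1)%:R
    - #|A1|%:R * (x \in A2)%:R + 2 * (x \in A1 :&: A2)%:R)) => [|x _]; last first.
  by rewrite choose_y inE -mulnb natrM; ring.
by rewrite big_split !sumrB /= !sumr_const -!mulr_sumr !sum_natr_in setIA; ring.
Qed.
End DistinctTriples.

Definition family_of_patterns k n (t : n.-tuple {ffun 'I_k -> bool}) :
  {ffun 'I_k -> {set 'I_n}} := [ffun i => [set x | tnth t x i]].

Lemma reindex_family_of_patterns (R : nmodType) k n (F : {ffun 'I_k -> {set 'I_n}} -> R) :
  \sum_U F U = \sum_(t : n.-tuple {ffun 'I_k -> bool}) F (family_of_patterns t).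
Proof.
rewrite (reindex (@family_of_patterns k n)) //.
exists (fun U : {ffun 'I_k -> {set 'I_n}} => [tuple [ffun i => x \in U i] | x < n]).
  move=> t _.
  by apply: eq_from_tnth => x; rewrite tnth_mktuple; apply/ffunP => i; rewrite !ffunE inE.
move=> U _; apply/ffunP => i; apply/setP => x.
by rewrite !ffunE inE tnth_mktuple ffunE.
Qed.

Lemma sum_card_family_of_patterns k n (t : n.-tuple {ffun 'I_k -> bool}) :
  (\sum_i #|family_of_patterns t i| = \sum_(e <- t) \sum_i (e i : nat))%N.
Proof.
under eq_bigr => i _ do rewrite card_sumb.
rewrite exchange_big big_tuple /=; apply: eq_bigr => x _.
by apply: eq_bigr => i _; rewrite ffunE inE.
Qed.

Definition column_count3 {R : pzRingType} (s : eps3 -> nat) : R :=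
  (fJ s [:: 1]%N * fJ s [:: 2]%N * fJ s [:: 3]%N)%:R
  - (fJ s [:: 1; 2]%N * fJ s [:: 3]%N)%:R
  - (fJ s [:: 2; 3]%N * fJ s [:: 1]%N)%:R
  - (fJ s [:: 1; 3]%N * fJ s [:: 2]%N)%:R
  + 2 * (fJ s [:: 1; 2; 3]%N)%:R.

Lemma fJ_counts n (t : n.-tuple eps3) J :
  fJ (fun e => counts t e) J =
  #|\bigcap_(j : 'I_3 | j.+1 \in J) ~: family_of_patterns t j|.
Proof.
rewrite /fJ (eq_bigr _ (fun e _ => countsE t e)).
transitivity (\sum_(e <- t) [forall j : 'I_3, (j.+1 \in J) ==> ~~ e j])%N.
  rewrite sum_count_mem [LHS]big_mkcond; apply: eq_bigr => e _.
  by case: [forall j, _]; rewrite ?muln1 ?muln0.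
rewrite big_tuple card_sumb; apply: eq_bigr => x _; congr nat_of_bool.
apply/forallP/bigcapP => [avoid j Jj | avoid j].
  by move/implyP/(_ Jj): (avoid j); rewrite !inE ffunE inE.
by apply/implyP => /avoid; rewrite !inE ffunE inE.
Qed.

Lemma forall_ord3 (P : pred 'I_3) :
  [forall i, P i] = [&& P ord0, P (lift ord0 ord0) & P (lift ord0 (lift ord0 ord0))].
Proof.
apply/forallP/and3P => [P_all | [P0 P1 P2] i]; first by split; apply: P_all.
case: (unliftP ord0 i) => [j -> | -> //]; case: (unliftP ord0 j) => [k -> | -> //].
by case: (unliftP ord0 k) => [[] | ->].
Qed.

Lemma bigcap_ord3 (T : finType) (P : pred 'I_3) (A : 'I_3 -> {set T}) :
  \bigcap_(j | P j) A j =
  (if P ord0 then A ord0 else setT)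
  :&: (if P (lift ord0 ord0) then A (lift ord0 ord0) else setT)
  :&: (if P (lift ord0 (lift ord0 ord0)) then A (lift ord0 (lift ord0 ord0)) else setT).
Proof. by rewrite big_mkcond !big_ord_recl big_ord0 /= setIT setIA. Qed.

Lemma card_admissible3 (R : comPzRingType) n (t : n.-tuple eps3) :
  #|admissible_column (family_of_patterns t)|%:R =
  column_count3 (fun e => counts t e) :> R.
Proof.
rewrite card_sumb natr_sum big_tuple3.
transitivity (\sum_x \sum_y \sum_z
  [&& uniq [:: x; y; z], x \in ~: family_of_patterns t ord0,
      y \in ~: family_of_patterns t (lift ord0 ord0)
    & z \in ~: family_of_patterns t (lift ord0 (lift ord0 ord0))]%:R : R).
  apply: eq_bigr => x _; apply: eq_bigr => y _; apply: eq_bigr => z _.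
  by rewrite inE forall_ord3 !in_setC.
rewrite sum_distinct_triples /column_count3 !fJ_counts.
by rewrite !bigcap_ord3 /= !setIT !setTI !natrM.
Qed.

Lemma natr_card_tuples_with_counts (R : numFieldType) (E : finType) n (s : E -> nat) :
  (\sum_e s e)%N = n ->
  #|tuples_with_counts n s|%:R = n`!%:R / (\prod_e (s e)`!)%:R :> R.
Proof.
move=> sum_s; rewrite -(card_tuples_with_counts sum_s) natrM mulfK //.
by rewrite pnatr_eq0 -lt0n prodn_gt0 // => e; rewrite fact_gt0.
Qed.

Theorem mainTheorem3 (n : nat) (hn : (0 < n)%N) :
  ((L 3 n)%:R : rat) =
  \sum_(s : {ffun eps3 -> 'I_n.+1} | (\sum_(e : eps3) (s e : nat) == n)%N)
    (-1) ^+ (\sum_(e : eps3) weight e * s e)%N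
    * ((n`!)%:R / (\prod_(e : eps3) (s e)`!)%:R)
    * (( (fJ (fun e => s e) [:: 1]%N * fJ (fun e => s e) [:: 2]%N
            * fJ (fun e => s e) [:: 3]%N)%:R
        - (fJ (fun e => s e) [:: 1; 2]%N * fJ (fun e => s e) [:: 3]%N)%:R
        - (fJ (fun e => s e) [:: 2; 3]%N * fJ (fun e => s e) [:: 1]%N)%:R
        - (fJ (fun e => s e) [:: 1; 3]%N * fJ (fun e => s e) [:: 2]%N)%:R
        + 2 * (fJ (fun e => s e) [:: 1; 2; 3]%N)%:R) ^+ n).
Proof.
pose F (s : {ffun eps3 -> 'I_n.+1}) : rat :=
  (-1) ^+ (\sum_e weight e * s e)%N * column_count3 (fun e => s e) ^+ n.
rewrite (latin_rect_incl_excl rat) reindex_family_of_patterns.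
transitivity (\sum_(t : n.-tuple eps3) F (counts t)).
  apply: eq_bigr => t _; rewrite card_admissible3 sum_card_family_of_patterns.
  congr (_ ^+ _ * _); rewrite [LHS]sum_count_mem.
  by apply: eq_bigr => e _; rewrite countsE mulnC.
rewrite sum_tuples_by_counts; apply: eq_bigr => s /eqP sum_s.
by rewrite -[F s *+ _]mulr_natr natr_card_tuples_with_counts // mulrAC.
Qed.
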